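(* Let $h>0$, $n\in\mathbb{N}$, and let $\lambda:\mathbb{T}\to\mathbb{R}$ be an $n$-cycle with values $\lambda_0,\dots,\lambda_{n-1}\in\mathbb{R}\setminus\{\pm\tfrac1h\}$, such that $0<|e_{\lambda}(nh)|\neq1$ and $0<|e_{-\lambda}(nh)|\neq1$. Define for $t\in\mathbb{T}$ $$p(t)=-\lambda(t+2h),\quad q(t)=\Delta_h\lambda(t+h)-\lambda(t+h)\lambda(t+2h),$$ $$r(t)=\Delta_h^2\lambda(t)-\lambda(t+h)\Delta_h\lambda(t+h)-\bigl(\lambda(t+h)+\lambda(t+2h)\bigr)\Delta_h\lambda(t)+\lambda(t)\lambda(t+h)\lambda(t+2h).$$ Then the third-order equation $$\Delta_h^3y(t)+p(t)\Delta_h^2y(t)+q(t)\Delta_h y(t)+r(t)y(t)=0,\qquad t\in\mathbb{T},$$ has Hyers–Ulam stability on $\mathbb{T}$ with Hyers–Ulam stability constant $K=\bigl(K_0(\lambda)\bigr)^2K_0(-\lambda)$.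
   Context: Fix $h>0$ and let $\mathbb{T}=\{0,h,2h,3h,\dots\}$. For $x:\mathbb{T}\to\mathbb{R}$, $\Delta_h x(t)=\frac{x(t+h)-x(t)}{h}$ and $\Delta_h^2x=\Delta_h(\Delta_h x)$, $\Delta_h^3x=\Delta_h(\Delta_h^2 x)$. An $n$-cycle is a function $\mu:\mathbb{T}\to\mathbb{R}$ with $\mu(t)=\mu_k$ whenever $t/h\equiv k\pmod n$, $k\in\{0,\dots,n-1\}$, which has period $n$ and no smaller period. For such $\mu$ define the discrete exponential $e_\mu(t)=\prod_{k=0}^{t/h-1}(1+h\mu(kh))$ (empty product $=1$), so $e_\mu(nh)=\prod_{k=0}^{n-1}(1+h\mu_k)$. For $k\in\{0,\dots,n-1\}$ define $$S_k(\mu)=\sum_{j=1}^{n}\prod_{i=0}^{j-1}\frac{1}{|1+h\mu_{(k+i)\bmod n}|},$$ (e.g. $S_0(\mu)=\frac{1}{|1+h\mu_0|}+\frac{1}{|1+h\mu_0||1+h\mu_1|}+\dots+\frac{1}{|1+h\mu_0|\cdots|1+h\mu_{n-1}|}$), and, when $0<|e_\mu(nh)|\neq1$, $$K_0(\mu)=\frac{h|e_\mu(nh)|}{\bigl|1-|e_\mu(nh)|\bigr|}\max\{S_0(\mu),\dots,S_{n-1}(\mu)\}.$$ Here $-\lambda$ denotes the $n$-cycle with values $-\lambda_0,\dots,-\lambda_{n-1}$. Hyers–Ulam stability: an equation $\mathcal{L}[y](t)=f(t)$, $t\in\mathbb{T}$ (with $\mathcal{L}$ a linear difference operator) has Hyers–Ulam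 stability on $\mathbb{T}$ with Hyers–Ulam stability constant $K>0$ if for every $\varepsilon>0$ and every $\xi:\mathbb{T}\to\mathbb{R}$ with $|\mathcal{L}[\xi](t)-f(t)|\le\varepsilon$ for all $t\in\mathbb{T}$, there is a solution $y:\mathbb{T}\to\mathbb{R}$ of the equation with $|\xi(t)-y(t)|\le K\varepsilon$ for all $t\in\mathbb{T}$. The minimum Hyers–Ulam stability constant is the smallest such $K$. *)

From Stdlib Require Import Reals Lra Lia.
Open Scope R_scope.

(* A function x : T -> R, T = {0,h,2h,...}, is represented by
   x : nat -> R with x k = value at t = k*h. *)

Definition dh (h : R) (x : nat -> R) : nat -> R :=
  fun k => (x (S k) - x k) / h.

Fixpoint prodR (m : nat) (f : nat -> R) : R :=
  match m with O => 1 | S m' => prodR m' f * f m' end.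
Fixpoint sumR (m : nat) (f : nat -> R) : R :=
  match m with O => 0 | S m' => sumR m' f + f m' end.
Fixpoint maxR (m : nat) (f : nat -> R) : R :=
  match m with
  | O => 0
  | S O => f O
  | S m' => Rmax (maxR m' f) (f m')
  end.

Definition is_ncycle (n : nat) (mu : nat -> R) : Prop :=
  (0 < n)%nat /\
  (forall k, mu (k + n)%nat = mu k) /\
  (forall m, (0 < m < n)%nat -> ~ (forall k, mu (k + m)%nat = mu k)).

(* e_mu(t) at t = k h *)
Definition e_disc (h : R) (mu : nat -> R) (k : nat) : R :=
  prodR k (fun j => 1 + h * mu j).

Definition S_k (h : R) (n : nat) (mu : nat -> R) (k : nat) : R :=
  sumR n (fun j' => prodR (S j')
             (fun i => / Rabs (1 + h * mu ((k + i) mod n)%nat))).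

Definition K0 (h : R) (n : nat) (mu : nat -> R) : R :=
  h * Rabs (e_disc h mu n) / Rabs (1 - Rabs (e_disc h mu n))
    * maxR n (S_k h n mu).

Definition negf (mu : nat -> R) : nat -> R := fun k => - mu k.

Definition HU_stable (L : (nat -> R) -> nat -> R) (K : R) : Prop :=
  0 < K /\
  forall eps : R, 0 < eps ->
  forall xi : nat -> R, (forall t, Rabs (L xi t) <= eps) ->
  exists y : nat -> R, (forall t, L y t = 0) /\
    (forall t, Rabs (xi t - y t) <= K * eps).

From Stdlib Require Import Reals Lra Lia FunctionalExtensionality.
Open Scope R_scope.

(* The operator L[y] = D^3 y + p D^2 y + q D y + r y factors as
   F_2 o F_1 o F_0 where F_s[y](k) = D y(k) - mu(k+s) y(k) with
   mu = -lam for s = 0 and mu = lam for s = 1, 2.  Each first-order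
   equation F[y] = g is rewritten as the recurrence
   z(k+1) = a(k) z(k) + d(k) with a(k) = 1 + h mu(k+s).  Using the
   periodic weight T(k) = sum_j prod_{i<=j} 1/|a(k+i)|, which satisfies
   |a(k)| T(k) = 1 + T(k+1) - 1/|e_mu(nh)|, a perturbation |d| <= delta
   is absorbed by a solution |z(k)| <= delta |E|/|1-|E|| T(k): starting
   from z(0) = 0 when |E| < 1, and as the limit of backward sums when
   |E| > 1.  Bounding T(k) by max S_j gives first-order stability with
   constant K0(mu); chaining the three factors yields K0(lam)^2 K0(-lam). *)

Lemma prodR_ext m f g : (forall i, (i < m)%nat -> f i = g i) -> prodR m f = prodR m g.
Proof.
  induction m; simpl; intros H; auto.
  rewrite IHm by (intros; apply H; lia). rewrite H by lia. reflexivity.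
Qed.

Lemma sumR_ext m f g : (forall i, (i < m)%nat -> f i = g i) -> sumR m f = sumR m g.
Proof.
  induction m; simpl; intros H; auto.
  rewrite IHm by (intros; apply H; lia). rewrite H by lia. reflexivity.
Qed.

Lemma prodR_Sl m f : prodR (S m) f = f 0%nat * prodR m (fun i => f (S i)).
Proof.
  induction m; [simpl; ring|].
  change (prodR (S (S m)) f) with (prodR (S m) f * f (S m)).
  rewrite IHm. simpl. ring.
Qed.

Lemma sumR_Sl m f : sumR (S m) f = f 0%nat + sumR m (fun i => f (S i)).
Proof.
  induction m; [simpl; ring|].
  change (sumR (S (S m)) f) with (sumR (S m) f + f (S m)).
  rewrite IHm. simpl. ring.
Qed.

Lemma sumR_scal m c f : sumR m (fun j => c * f j) = c * sumR m f.
Proof. induction m; simpl; [ring|]. rewrite IHm; ring. Qed.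

Lemma prodR_add m p f : prodR (m + p) f = prodR m f * prodR p (fun i => f (m + i)%nat).
Proof.
  induction p; [rewrite Nat.add_0_r; simpl; ring|].
  rewrite Nat.add_succ_r. simpl. rewrite IHp. ring.
Qed.

Lemma prodR_inv_abs m f : prodR m (fun i => / Rabs (f i)) = / Rabs (prodR m f).
Proof.
  induction m; simpl; [rewrite Rabs_R1, Rinv_1; reflexivity|].
  rewrite IHm, Rabs_mult, Rinv_mult. reflexivity.
Qed.

Lemma prodR_nz m f : (forall i, f i <> 0) -> prodR m f <> 0.
Proof. intros H; induction m; simpl; [lra|]. apply Rmult_integral_contrapositive; auto. Qed.

Lemma prodR_pos m f : (forall i, 0 < f i) -> 0 < prodR m f.
Proof. intros H; induction m; simpl; [lra|]. apply Rmult_lt_0_compat; auto. Qed.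

Lemma sumR_pos m f : (0 < m)%nat -> (forall i, 0 < f i) -> 0 < sumR m f.
Proof.
  intros Hm H; induction m; [lia|]. simpl. destruct m.
  - simpl. specialize (H 0%nat); lra.
  - specialize (IHm ltac:(lia)). specialize (H (S m)). lra.
Qed.

Lemma maxR_ge n f k : (k < n)%nat -> f k <= maxR n f.
Proof.
  induction n; intros Hk; [lia|].
  destruct n; [replace k with 0%nat by lia; simpl; lra|].
  change (maxR (S (S n)) f) with (Rmax (maxR (S n) f) (f (S n))).
  destruct (Nat.eq_dec k (S n)) as [->|Hne]; [apply Rmax_r|].
  eapply Rle_trans; [apply IHn; lia | apply Rmax_l].
Qed.

Section Periodic.
Variables (a : nat -> R) (n : nat).
Hypothesis Hper : forall k, a (k + n)%nat = a k.

Lemma periodic_mult q k : a (k + q * n)%nat = a k.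
Proof.
  induction q; [rewrite Nat.mul_0_l, Nat.add_0_r; reflexivity|].
  replace (k + S q * n)%nat with (k + q * n + n)%nat by lia.
  rewrite Hper; auto.
Qed.

Lemma periodic_mod (Hn : (0 < n)%nat) k : a (k mod n) = a k.
Proof.
  rewrite <- (periodic_mult (k / n) (k mod n)). f_equal.
  pose proof (Nat.div_mod_eq k n). lia.
Qed.

Hypothesis Hnz : forall k, a k <> 0.

Lemma prodR_period_shift m : prodR n (fun i => a (m + i)%nat) = prodR n a.
Proof.
  induction m; [apply prodR_ext; reflexivity|].
  assert (Hstep : prodR (S n) (fun i => a (m + i)%nat)
                  = prodR n (fun i => a (m + i)%nat) * a (m + n)%nat) by reflexivity.
  rewrite prodR_Sl, Hper, Nat.add_0_r in Hstep.
  rewrite (prodR_ext n _ (fun i => a (m + S i)%nat)) by (intros; f_equal; lia).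
  rewrite <- IHm. apply (Rmult_eq_reg_l (a m)); auto. lra.
Qed.

Lemma prodR_periods q : prodR (q * n) a = prodR n a ^ q.
Proof.
  induction q; [reflexivity|].
  replace (S q * n)%nat with (q * n + n)%nat by lia.
  rewrite prodR_add, prodR_period_shift, IHq. simpl. ring.
Qed.

End Periodic.

Section LinearRecurrence.
Variables (a d : nat -> R).

Fixpoint forward_sol (v : R) (k : nat) : R :=
  match k with O => v | S k' => a k' * forward_sol v k' + d k' end.

(* The value at k of the solution vanishing at k + m. *)
Fixpoint backward_sol (m k : nat) : R :=
  match m with O => 0 | S m' => (backward_sol m' (S k) - d k) / a k end.

Lemma forward_sol_diff v v' k : forward_sol v k - forward_sol v' k = prodR k a * (v - v').
Proof.
  induction k; simpl; [ring|].
  replace (a k * forward_sol v k + d k - (a k * forward_sol v' k + d k))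
    with (a k * (forward_sol v k - forward_sol v' k)) by ring.
  rewrite IHk. ring.
Qed.

Lemma recurrence_decay (W : nat -> R) (delta : R) :
  0 <= delta -> (forall k, 0 <= W k) -> (forall k, W (S k) = Rabs (a k) * W k + 1) ->
  (forall k, Rabs (d k) <= delta) ->
  exists z, (forall k, z (S k) = a k * z k + d k) /\ (forall k, Rabs (z k) <= delta * W k).
Proof.
  intros Hdel HW HWrec Hd. exists (forward_sol 0). split; [reflexivity|].
  induction k; simpl; [rewrite Rabs_R0; apply Rmult_le_pos; auto|].
  eapply Rle_trans; [apply Rabs_triang|]. rewrite Rabs_mult, HWrec.
  assert (Rabs (a k) * Rabs (forward_sol 0 k) <= Rabs (a k) * (delta * W k))
    by (apply Rmult_le_compat_l; auto; apply Rabs_pos).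
  specialize (Hd k). nra.
Qed.

(* The expanding case: W(k+1) + 1 = |a(k)| W(k), W bounded, and the
   products of a unbounded.  The backward solutions then converge. *)
Section Expanding.
Variables (W : nat -> R) (delta Wmax : R).
Hypotheses (Hdel : 0 <= delta) (HW : forall k, 0 <= W k) (HWmax : forall k, W k <= Wmax)
  (HWrec : forall k, W (S k) + 1 = Rabs (a k) * W k) (Hnz : forall k, a k <> 0)
  (Hd : forall k, Rabs (d k) <= delta)
  (Hunbounded : forall B, exists N, B < Rabs (prodR N a)).

Lemma backward_sol_bound m : forall k, Rabs (backward_sol m k) <= delta * W k.
Proof.
  induction m; intros k; simpl; [rewrite Rabs_R0; apply Rmult_le_pos; auto|].
  assert (Ha : 0 < Rabs (a k)) by (apply Rabs_pos_lt; auto).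
  assert (Hnum : Rabs (backward_sol m (S k) - d k) <= delta * (W (S k) + 1)).
  { unfold Rminus. eapply Rle_trans; [apply Rabs_triang|]. rewrite Rabs_Ropp.
    specialize (IHm (S k)). specialize (Hd k). lra. }
  unfold Rdiv. rewrite Rabs_mult, Rabs_inv.
  replace (delta * W k) with (delta * (W (S k) + 1) * / Rabs (a k))
    by (rewrite HWrec; field; lra).
  apply Rmult_le_compat_r; auto. left; apply Rinv_0_lt_compat; auto.
Qed.

Lemma backward_sol_diff m : forall p k,
  backward_sol (m + p) k - backward_sol m k
  = backward_sol p (k + m) / prodR m (fun i => a (k + i)%nat).
Proof.
  induction m; intros p k; [simpl; rewrite Nat.add_0_r; field|].
  change (S m + p)%nat with (S (m + p)). cbn [backward_sol].
  replace ((backward_sol (m + p) (S k) - d k) / a k - (backward_sol m (S k) - d k) / a k)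
    with ((backward_sol (m + p) (S k) - backward_sol m (S k)) / a k) by (field; auto).
  rewrite IHm, prodR_Sl.
  rewrite (prodR_ext m (fun i => a (k + S i)%nat) (fun i => a (S k + i)%nat))
    by (intros; f_equal; lia).
  replace (k + S m)%nat with (S k + m)%nat by lia. rewrite Nat.add_0_r.
  field. split; auto. apply prodR_nz; auto.
Qed.

Lemma forward_backward k : forall m,
  forward_sol (backward_sol (m + k) 0) k = backward_sol m k.
Proof.
  induction k; intros m; [simpl; rewrite Nat.add_0_r; reflexivity|].
  cbn [forward_sol]. replace (m + S k)%nat with (S m + k)%nat by lia.
  rewrite IHk. cbn [backward_sol]. field; auto.
Qed.

Lemma backward_sol_cauchy : Cauchy_crit (fun m => backward_sol m 0).
Proof.
  intros eps Heps.
  destruct (Hunbounded (delta * Wmax / (eps / 2))) as [N HN].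
  assert (HP : 0 < Rabs (prodR N a)) by (apply Rabs_pos_lt, prodR_nz; auto).
  assert (Hclose : forall m, (m >= N)%nat ->
            Rabs (backward_sol m 0 - backward_sol N 0) < eps / 2).
  { intros m Hm. replace m with (N + (m - N))%nat by lia. rewrite backward_sol_diff.
    rewrite (prodR_ext N _ a) by reflexivity.
    unfold Rdiv at 1. rewrite Rabs_mult, Rabs_inv.
    apply (Rmult_lt_reg_r (Rabs (prodR N a))); auto.
    rewrite Rmult_assoc, Rinv_l, Rmult_1_r by lra.
    eapply Rle_lt_trans; [apply backward_sol_bound|].
    apply (Rmult_lt_reg_r (/ (eps / 2))); [apply Rinv_0_lt_compat; lra|].
    eapply Rle_lt_trans; [|replace (eps / 2 * Rabs (prodR N a) * / (eps / 2))
                              with (Rabs (prodR N a)) by (field; lra); apply HN].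
    apply Rmult_le_compat_r; [left; apply Rinv_0_lt_compat; lra|].
    apply Rmult_le_compat_l; auto. }
  exists N. intros m1 m2 H1 H2. unfold Rdist.
  replace (backward_sol m1 0 - backward_sol m2 0)
    with ((backward_sol m1 0 - backward_sol N 0) - (backward_sol m2 0 - backward_sol N 0)) by ring.
  unfold Rminus at 1. eapply Rle_lt_trans; [apply Rabs_triang|]. rewrite Rabs_Ropp.
  pose proof (Hclose m1 H1). pose proof (Hclose m2 H2). lra.
Qed.

Lemma recurrence_growth :
  exists z, (forall k, z (S k) = a k * z k + d k) /\ (forall k, Rabs (z k) <= delta * W k).
Proof.
  destruct (R_complete _ backward_sol_cauchy) as [l Hl].
  exists (forward_sol l). split; [reflexivity|].
  intros k. apply Rle_plus_epsilon. intros eps Heps.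
  set (P := Rabs (prodR k a)).
  assert (HP : 0 <= P) by apply Rabs_pos.
  destruct (Hl (eps / (P + 1))) as [N HN]; [apply Rlt_gt, Rdiv_lt_0_compat; lra|].
  specialize (HN (N + k)%nat ltac:(lia)). unfold Rdist in HN.
  rewrite Rabs_minus_sym in HN.
  replace (forward_sol l k)
    with ((forward_sol l k - forward_sol (backward_sol (N + k) 0) k)
          + forward_sol (backward_sol (N + k) 0) k) by ring.
  eapply Rle_trans; [apply Rabs_triang|].
  rewrite forward_sol_diff, forward_backward, Rabs_mult. fold P.
  assert (P * Rabs (l - backward_sol (N + k) 0) <= P * (eps / (P + 1)))
    by (apply Rmult_le_compat_l; lra).
  assert (P * (eps / (P + 1)) <= eps).
  { apply (Rmult_le_reg_r (P + 1)); [lra|].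
    unfold Rdiv. rewrite Rmult_assoc, Rmult_assoc, Rinv_l by lra. nra. }
  pose proof (backward_sol_bound N k). lra.
Qed.

End Expanding.
End LinearRecurrence.

Definition weight (a : nat -> R) (n k : nat) : R :=
  sumR n (fun j => prodR (S j) (fun i => / Rabs (a (k + i)%nat))).

Section Weight.
Variables (a : nat -> R) (n : nat).
Hypotheses (Hn : (0 < n)%nat) (Hper : forall k, a (k + n)%nat = a k)
  (Hnz : forall k, a k <> 0).

Lemma weight_pos k : 0 < weight a n k.
Proof.
  apply sumR_pos; auto. intros. apply prodR_pos. intros.
  apply Rinv_0_lt_compat, Rabs_pos_lt; auto.
Qed.

Lemma weight_periodic k : weight a n (k + n) = weight a n k.
Proof.
  apply sumR_ext; intros; apply prodR_ext; intros.
  rewrite <- Nat.add_assoc, (Nat.add_comm n), Nat.add_assoc, Hper. reflexivity.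
Qed.

(* Being periodic, the weight takes only finitely many values. *)
Lemma weight_bounded k : weight a n k <= maxR n (weight a n).
Proof.
  rewrite <- (periodic_mod (weight a n) n weight_periodic Hn).
  apply maxR_ge, Nat.mod_upper_bound; lia.
Qed.

Lemma weight_rec k :
  Rabs (a k) * weight a n k = 1 + weight a n (S k) - / Rabs (prodR n a).
Proof.
  destruct n as [|n']; [lia|].
  set (G := fun j => prodR j (fun i => / Rabs (a (S k + i)%nat))).
  assert (HG : sumR (S n') G = 1 + weight a (S n') (S k) - / Rabs (prodR (S n') a)).
  { rewrite sumR_Sl.
    assert (weight a (S n') (S k) = sumR n' (fun i => G (S i)) + G (S n')) by reflexivity.
    assert (G (S n') = / Rabs (prodR (S n') a))
      by (unfold G; rewrite prodR_inv_abs, prodR_period_shift; auto).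
    change (G 0%nat) with 1. lra. }
  assert (Hw : weight a (S n') k = / Rabs (a k) * sumR (S n') G).
  { unfold weight. rewrite <- sumR_scal. apply sumR_ext. intros j _.
    rewrite prodR_Sl, Nat.add_0_r. f_equal. apply prodR_ext. intros.
    replace (k + S i)%nat with (S k + i)%nat by lia. reflexivity. }
  rewrite Hw, HG. field. split; apply Rabs_no_R0; [apply prodR_nz|]; auto.
Qed.

Lemma periodic_recurrence d delta :
  Rabs (prodR n a) <> 1 -> 0 <= delta -> (forall k, Rabs (d k) <= delta) ->
  exists z, (forall k, z (S k) = a k * z k + d k) /\
    (forall k, Rabs (z k) <=
       delta * (Rabs (prodR n a) / Rabs (1 - Rabs (prodR n a)) * weight a n k)).
Proof.
  intros HP1 Hdel Hd. set (P := Rabs (prodR n a)) in *.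
  assert (HP0 : 0 < P) by (apply Rabs_pos_lt, prodR_nz; auto).
  assert (Hc : 0 < P / Rabs (1 - P))
    by (apply Rdiv_lt_0_compat; auto; apply Rabs_pos_lt; intro; apply HP1; lra).
  set (W := fun k => P / Rabs (1 - P) * weight a n k).
  assert (HW : forall k, 0 <= W k)
    by (intros; left; apply Rmult_lt_0_compat; auto; apply weight_pos).
  assert (HWshift : forall k, W (S k) = Rabs (a k) * W k + P / Rabs (1 - P) * (/ P - 1)).
  { intros k. unfold W. replace (weight a n (S k)) with (Rabs (a k) * weight a n k - 1 + / P)
      by (unfold P; rewrite weight_rec; ring). ring. }
  destruct (Rlt_or_le P 1) as [Hlt | Hge].
  - apply (recurrence_decay a d W delta); auto. intros k. rewrite HWshift.
    rewrite (Rabs_pos_eq (1 - P)) by lra. f_equal. field. split; lra.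
  - assert (Hgt : 1 < P) by (destruct Hge; auto; exfalso; apply HP1; auto).
    apply (recurrence_growth a d W delta (P / Rabs (1 - P) * maxR n (weight a n))); auto.
    + intros k. apply Rmult_le_compat_l; [lra | apply weight_bounded].
    + intros k. rewrite HWshift, Rabs_minus_sym, (Rabs_pos_eq (P - 1)) by lra. field. split; lra.
    + intros B. destruct (Pow_x_infinity (prodR n a)) with (b := B + 1) as [N HN]; [fold P; lra|].
      exists (N * n)%nat. rewrite prodR_periods by auto. specialize (HN N (le_n _)). lra.
Qed.

End Weight.

Definition Fop (h : R) (mu : nat -> R) (y : nat -> R) : nat -> R :=
  fun k => dh h y k - mu k * y k.

Lemma first_order_HU h n mu M :
  0 < h -> (0 < n)%nat -> (forall k, mu (k + n)%nat = mu k) ->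
  (forall k, 1 + h * mu k <> 0) -> Rabs (e_disc h mu n) <> 1 ->
  (forall k, weight (fun j => 1 + h * mu j) n k <= M) ->
  forall eps g xi, 0 <= eps -> (forall t, Rabs (Fop h mu xi t - g t) <= eps) ->
  exists y, (forall t, Fop h mu y t = g t) /\
    (forall t, Rabs (xi t - y t)
               <= h * Rabs (e_disc h mu n) / Rabs (1 - Rabs (e_disc h mu n)) * M * eps).
Proof.
  intros Hh Hn Hper Hnz HE1 HM eps g xi Heps Hxi.
  set (a := fun j => 1 + h * mu j) in HM.
  set (d := fun k => xi (S k) - a k * xi k - h * g k).
  assert (Hd : forall k, Rabs (d k) <= h * eps).
  { intros k. replace (d k) with (h * (Fop h mu xi k - g k))
      by (unfold d, Fop, dh, a; field; lra).
    rewrite Rabs_mult, Rabs_pos_eq by lra. apply Rmult_le_compat_l; [lra | apply Hxi]. }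
  destruct (periodic_recurrence a n Hn ltac:(intros; unfold a; rewrite Hper; reflexivity)
              Hnz d (h * eps) HE1 ltac:(nra) Hd) as [z [Hzrec Hzbound]].
  exists (fun k => xi k - z k). split.
  - intros t. unfold Fop, dh. rewrite Hzrec. unfold d, a. field. lra.
  - intros t. replace (xi t - (xi t - z t)) with (z t) by ring.
    eapply Rle_trans; [apply Hzbound|]. change (prodR n a) with (e_disc h mu n).
    assert (HE : 0 < Rabs (1 - Rabs (e_disc h mu n)))
      by (apply Rabs_pos_lt; intro; apply HE1; lra).
    set (E := Rabs (e_disc h mu n)) in *.
    replace (h * E / Rabs (1 - E) * M * eps) with (h * eps * (E / Rabs (1 - E) * M))
      by (field; lra).
    apply Rmult_le_compat_l; [nra|]. apply Rmult_le_compat_l; [|apply HM].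
    unfold Rdiv; apply Rmult_le_pos; [apply Rabs_pos | left; apply Rinv_0_lt_compat; lra].
Qed.

(* Specialization to the shifted coefficient mu(k+s): the product over a
   period is unchanged and the weight is one of the sums S_j of the paper,
   so the constant is K0(mu). *)
Lemma first_order_HU_shift h n mu s :
  0 < h -> (0 < n)%nat -> (forall k, mu (k + n)%nat = mu k) ->
  (forall k, 1 + h * mu k <> 0) -> Rabs (e_disc h mu n) <> 1 ->
  forall eps g xi, 0 <= eps ->
  (forall t, Rabs (Fop h (fun k => mu (k + s)%nat) xi t - g t) <= eps) ->
  exists y, (forall t, Fop h (fun k => mu (k + s)%nat) y t = g t) /\
    (forall t, Rabs (xi t - y t) <= K0 h n mu * eps).
Proof.
  intros Hh Hn Hper Hnz HE1.
  set (b := fun j => 1 + h * mu j).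
  assert (Hbper : forall k, b (k + n)%nat = b k) by (intros; unfold b; rewrite Hper; auto).
  assert (Hprod : e_disc h (fun k => mu (k + s)%nat) n = e_disc h mu n).
  { unfold e_disc. fold b. rewrite <- (prodR_period_shift b n Hbper Hnz s).
    apply prodR_ext. intros; unfold b; rewrite Nat.add_comm; reflexivity. }
  assert (Hweight : forall k, weight (fun j => 1 + h * mu (j + s)%nat) n k
                              = S_k h n mu ((k + s) mod n)).
  { intros k. apply sumR_ext. intros j _. apply prodR_ext. intros i _.
    rewrite Nat.Div0.add_mod_idemp_l, (periodic_mod mu n Hper Hn).
    do 5 f_equal. lia. }
  intros eps g xi Heps Hxi.
  destruct (first_order_HU h n (fun k => mu (k + s)%nat) (maxR n (S_k h n mu)) Hh Hn
              ltac:(intros k; cbv beta; rewrite Nat.add_shuffle0; apply Hper)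
              (fun k => Hnz (k + s)%nat)
              ltac:(rewrite Hprod; auto)
              ltac:(intros; rewrite Hweight; apply maxR_ge, Nat.mod_upper_bound; lia)
              eps g xi Heps Hxi) as [y [Hy Hbound]].
  exists y. split; auto. intros t. rewrite Hprod in Hbound. apply Hbound.
Qed.

Lemma K0_pos h n mu : 0 < h -> (0 < n)%nat -> (forall k, 1 + h * mu k <> 0) ->
  Rabs (e_disc h mu n) <> 1 -> 0 < K0 h n mu.
Proof.
  intros Hh Hn Hnz HE1. unfold K0.
  assert (0 < Rabs (e_disc h mu n))
    by (apply Rabs_pos_lt; unfold e_disc; apply prodR_nz; auto).
  assert (0 < Rabs (1 - Rabs (e_disc h mu n))) by (apply Rabs_pos_lt; intro; apply HE1; lra).
  assert (0 < maxR n (S_k h n mu)).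
  { eapply Rlt_le_trans; [|apply (maxR_ge n _ 0%nat Hn)]. apply sumR_pos; auto.
    intros; apply prodR_pos; intros; apply Rinv_0_lt_compat, Rabs_pos_lt; auto. }
  apply Rmult_lt_0_compat; auto. apply Rdiv_lt_0_compat; auto. nra.
Qed.

Lemma one_plus_nz h x : 0 < h -> x <> - (1 / h) -> 1 + h * x <> 0.
Proof.
  intros Hh Hx H. apply Hx. apply (Rmult_eq_reg_l h); [|lra].
  replace (h * x) with (-1) by lra. field. lra.
Qed.

Lemma third_order_factorization h lam y k : 0 < h ->
  dh h (dh h (dh h y)) k + - lam (k + 2)%nat * dh h (dh h y) k
  + (dh h lam (k + 1)%nat - lam (k + 1)%nat * lam (k + 2)%nat) * dh h y k
  + (dh h (dh h lam) k - lam (k + 1)%nat * dh h lam (k + 1)%nat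
     - (lam (k + 1)%nat + lam (k + 2)%nat) * dh h lam k
     + lam k * lam (k + 1)%nat * lam (k + 2)%nat) * y k
  = Fop h (fun j => lam (j + 2)%nat)
      (Fop h (fun j => lam (j + 1)%nat) (Fop h (fun j => negf lam (j + 0)%nat) y)) k.
Proof.
  intros Hh. unfold Fop, negf, dh.
  repeat rewrite ?Nat.add_succ_l, ?Nat.add_succ_r, ?Nat.add_0_r. field. lra.
Qed.

Theorem theorem5p5 (h : R) (n : nat) (lam : nat -> R) :
  0 < h ->
  is_ncycle n lam ->
  (forall k, lam k <> 1 / h /\ lam k <> - (1 / h)) ->
  0 < Rabs (e_disc h lam n) -> Rabs (e_disc h lam n) <> 1 ->
  0 < Rabs (e_disc h (negf lam) n) -> Rabs (e_disc h (negf lam) n) <> 1 ->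
  let p := fun k => - lam (k + 2)%nat in
  let q := fun k => dh h lam (k + 1)%nat - lam (k + 1)%nat * lam (k + 2)%nat in
  let r := fun k =>
      dh h (dh h lam) k - lam (k + 1)%nat * dh h lam (k + 1)%nat
      - (lam (k + 1)%nat + lam (k + 2)%nat) * dh h lam k
      + lam k * lam (k + 1)%nat * lam (k + 2)%nat in
  HU_stable
    (fun y k => dh h (dh h (dh h y)) k + p k * dh h (dh h y) k
                + q k * dh h y k + r k * y k)
    ((K0 h n lam) ^ 2 * K0 h n (negf lam)).
Proof.
  intros Hh [Hn [Hper _]] Hl _ HE1 _ HF1 p q r.
  assert (Hnz : forall k, 1 + h * lam k <> 0) by (intros; apply one_plus_nz, Hl; auto).
  assert (Hnz' : forall k, 1 + h * negf lam k <> 0).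
  { intros k. unfold negf. apply one_plus_nz; auto. intro. apply (proj1 (Hl k)). lra. }
  assert (Hper' : forall k, negf lam (k + n)%nat = negf lam k)
    by (intros; unfold negf; rewrite Hper; auto).
  pose proof (K0_pos h n lam Hh Hn Hnz HE1) as HK.
  pose proof (K0_pos h n (negf lam) Hh Hn Hnz' HF1) as HK'.
  split; [apply Rmult_lt_0_compat; auto; simpl; nra|].
  intros eps Heps xi Hxi.
  set (F0 := Fop h (fun j => negf lam (j + 0)%nat)).
  set (F1 := Fop h (fun j => lam (j + 1)%nat)).
  set (F2 := Fop h (fun j => lam (j + 2)%nat)).
  assert (HL : forall y k, dh h (dh h (dh h y)) k + p k * dh h (dh h y) k
                           + q k * dh h y k + r k * y k = F2 (F1 (F0 y)) k)
    by (intros; apply third_order_factorization; auto).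
  (* Solve the three first-order equations from the outermost factor inwards. *)
  destruct (first_order_HU_shift h n lam 2 Hh Hn Hper Hnz HE1 eps (fun _ => 0) (F1 (F0 xi)))
    as [w1 [Hw1 Hw1b]]; [lra | intros t; rewrite Rminus_0_r, <- HL; auto |].
  destruct (first_order_HU_shift h n lam 1 Hh Hn Hper Hnz HE1 (K0 h n lam * eps) w1 (F0 xi))
    as [w0 [Hw0 Hw0b]]; [nra | exact Hw1b |].
  destruct (first_order_HU_shift h n (negf lam) 0 Hh Hn Hper' Hnz' HF1
              (K0 h n lam * (K0 h n lam * eps)) w0 xi) as [y [Hy Hyb]]; [nra | exact Hw0b |].
  exists y. split.
  - intros t. rewrite HL.
    replace (F0 y) with w0 by (apply functional_extensionality; intros; symmetry; apply Hy).
    replace (F1 w0) with w1 by (apply functional_extensionality; intros; symmetry; apply Hw0).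
    apply Hw1.
  - intros t. eapply Rle_trans; [apply Hyb|]. right. simpl. ring.
Qed.
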